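(* Let $T$ be a tree on $n\ge2$ vertices, $k\ge2$ even, and $M$ the order-$k$ Steiner distance hypermatrix of $T$. For every $\mathbf{c}\in\mathcal{H}_n$, writing $\alpha'_e=\mathbf{c}^T\mathbf{a}'_e$ for $e\in E(T)$, $$M(\mathbf{c},\ldots,\mathbf{c})=-2\sum_{e\in E(T)}(\alpha'_e)^k.$$
   Context: $T$ is a tree with vertex set $\{1,\dots,n\}$ and edge set $E(T)$. For $U\subseteq V(T)$, the Steiner distance $S(U)$ is the minimum number of edges of a connected subgraph of $T$ whose vertex set contains $U$. The order-$k$ Steiner distance hypermatrix $M$ of $T$ has entries $M_{(i_1,\dots,i_k)}=S(\{i_1,\dots,i_k\})$, and $M(\mathbf{x}_1,\dots,\mathbf{x}_k)=\sum_{\mathbf{i}\in V(T)^k}M_{\mathbf{i}}\prod_{j=1}^k x_{j i_j}$. For an edge $e$, $A(e)$ and $B(e)$ are the vertex sets of the two components of $T-e$ (labeled arbitrarily), $\mathbf{a}_e$ is the indicator vector of $A(e)$, $\mathbb{J}$ is the all-ones vector in $\mathbb{R}^n$, and $\mathbf{a}'_e=\mathbf{a}_e-\frac{|A(e)|}{n}\mathbb{J}$. $\mathcal{H}_n=\{\mathbf{c}\in\mathbb{R}^n:\mathbf{c}^T\mathbb{J}=0\}$. *)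

From mathcomp Require Import all_boot all_order all_algebra.
Set Implicit Arguments. Unset Strict Implicit. Unset Printing Implicit Defensive.
Import Order.TTheory GRing.Theory Num.Theory.

(* A simple graph on vertex set 'I_n (standing for {1,...,n}) is given by a
   symmetric irreflexive adjacency relation. *)
Definition simple_graph (n : nat) (g : rel 'I_n) : Prop :=
  symmetric g /\ irreflexive g.

Definition edges (n : nat) (g : rel 'I_n) : {set {set 'I_n}} :=
  [set f : {set 'I_n} | [exists x : 'I_n, exists y : 'I_n, g x y && (f == [set x; y])]].

Definition is_cycle (n : nat) (g : rel 'I_n) (p : seq 'I_n) : bool :=
  (3 <= size p) && ucycleb g p.

Definition is_tree (n : nat) (g : rel 'I_n) : Prop :=
  simple_graph g /\ (forall x y, connect g x y) /\
  (forall p, ~~ is_cycle g p).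

Definition del_edge (n : nat) (g : rel 'I_n) (f : {set 'I_n}) : rel 'I_n :=
  fun a b => g a b && ([set a; b] != f).

Definition comp_del (n : nat) (g : rel 'I_n) (f : {set 'I_n}) (x : 'I_n)
  : {set 'I_n} := [set z | connect (del_edge g f) x z].

Definition steiner_ok (n : nat) (g : rel 'I_n) (U W : {set 'I_n})
  (F : {set {set 'I_n}}) : bool :=
  [&& U \subset W,
      F \subset edges g,
      [forall f in F, f \subset W] &
      [forall x in W, forall y in W,
         connect (fun a b => [set a; b] \in F) x y]].

(* Steiner distance: minimum number of edges of such a subgraph
   (n is an upper bound for the minimum in a tree, since (V, E(T)) works). *)
Definition steiner (n : nat) (g : rel 'I_n) (U : {set 'I_n}) : nat :=
  \big[minn/n]_(W : {set 'I_n})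
     \big[minn/n]_(F : {set {set 'I_n}} | steiner_ok g U W F) #|F|.

Local Open Scope ring_scope.

Definition steiner_form (R : ringType) (n k : nat) (g : rel 'I_n)
  (c : 'I_n -> R) : R :=
  \sum_(i : {ffun 'I_k -> 'I_n})
     (steiner g [set i j | j : 'I_k])%:R * \prod_(j : 'I_k) c (i j).

(* alpha'_e = c^T a'_e, a'_e = a_e - |A(e)|/n J *)
Definition alpha' (R : fieldType) (n : nat) (c : 'I_n -> R) (A : {set 'I_n}) : R :=
  \sum_(i : 'I_n) c i * ((i \in A)%:R - (#|A|)%:R / n%:R).

(* In a tree, every connected subgraph containing U must use each edge e whose
   two sides A(e), B(e) both meet U, and an edge with U entirely on one side can
   be pruned together with everything beyond it.  Hence S(U) is the number of
   edges separating U.  Exchanging the sums, the contribution of an edge e is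
   the sum of prod_j c(i_j) over the tuples i hitting both sides of e, which by
   inclusion-exclusion is (c^T J)^k - (c^T a_e)^k - (c^T b_e)^k; since c^T J = 0
   this is -(1 + (-1)^k) (alpha'_e)^k = -2 (alpha'_e)^k for k even. *)

From mathcomp Require Import all_boot all_order all_algebra.
From mathcomp Require Import ring.
Import Order.TTheory GRing.Theory Num.Theory.
Set Implicit Arguments. Unset Strict Implicit. Unset Printing Implicit Defensive.

Lemma connect_ind (T : finType) (e : rel T) (P : T -> Prop) s :
  P s -> (forall a b, connect e s a -> P a -> e a b -> P b) ->
  forall t, connect e s t -> P t.
Proof.
move=> Ps step t /connectP [p + ->]; elim/last_ind: p => [//|p x IHp].
rewrite rcons_path last_rcons => /andP [sp ex].
by apply: (step (last s p)) => //; [apply/connectP; exists p | apply: IHp].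
Qed.

Definition separates (T : finType) (U S : {set T}) :=
  (U :&: S != set0) && (U :\: S != set0).

Section Tree.

Variables (n : nat) (g : rel 'I_n).
Hypothesis tree_g : is_tree g.

Let sym_g : symmetric g := tree_g.1.1.
Let irr_g : irreflexive g := tree_g.1.2.

Lemma edgesP f : reflect (exists x y, g x y /\ f = [set x; y]) (f \in edges g).
Proof.
rewrite inE; apply: (iffP existsP) => [[x /existsP [y /andP [gxy /eqP ->]]]|].
  by exists x, y.
by case=> x [y [gxy ->]]; exists x; apply/existsP; exists y; rewrite gxy eqxx.
Qed.

Lemma edge_at f z : f \in edges g -> z \in f -> exists2 a, g z a & f = [set z; a].
Proof.
case/edgesP=> x [y [gxy ->]]; rewrite !inE => /orP [] /eqP ->.
  by exists y.
by exists x; rewrite 1?sym_g 1?setUC.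
Qed.

Lemma edges_adj a b : [set a; b] \in edges g -> g a b.
Proof.
move=> abe; have [c gac /setP /(_ c)] := edge_at abe (set21 a b).
rewrite !inE eqxx orbT => /orP [/eqP ca | /eqP <- //].
by move: gac; rewrite ca irr_g.
Qed.

Lemma del_edge_sym f : symmetric (del_edge g f).
Proof. by move=> a b; rewrite /del_edge sym_g setUC. Qed.

Lemma connect_del_edge_sym f : connect_sym (del_edge g f).
Proof. exact/sym_connect_sym/del_edge_sym. Qed.

Lemma del_edge_disconnects x y : g x y -> ~~ connect (del_edge g [set x; y]) x y.
Proof.
move=> gxy; apply/negP => /connectP [p pth lst].
case: (shortenP pth) lst => p' pth' up' _ lst.
suff : is_cycle g (x :: p') by rewrite (negbTE (tree_g.2.2 _)).
rewrite /is_cycle /ucycleb up' andbT /= rcons_path -lst sym_g gxy andbT.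
rewrite (sub_path _ pth') ?andbT; last by move=> a b /andP [].
case: p' pth' {up'} lst => [|z [|w q]] //=.
- by move=> _ xy; rewrite -xy irr_g in gxy.
- by rewrite andbT /del_edge => /andP [_] + zy; rewrite -zy eqxx.
Qed.

Lemma del_edge_cover x y z : g x y ->
  connect (del_edge g [set x; y]) x z || connect (del_edge g [set x; y]) y z.
Proof.
move=> gxy; move: z (tree_g.2.1 x z); apply: connect_ind => [|a b _ IHa gab].
  by rewrite connect0.
have [eab|neab] := eqVneq [set a; b] [set x; y].
  have : b \in [set x; y] by rewrite -eab set22.
  by rewrite !inE => /orP [] /eqP ->; rewrite connect0 ?orbT.
have dab : del_edge g [set x; y] a b by rewrite /del_edge gab neab.
by case/orP: IHa => H; apply/orP; [left | right]; apply: connect_trans H (connect1 dab).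
Qed.

Lemma comp_del_compl x y z : g x y ->
  (z \in comp_del g [set x; y] y) = (z \notin comp_del g [set x; y] x).
Proof.
move=> gxy; rewrite !inE.
have := del_edge_cover z gxy; have := del_edge_disconnects gxy.
case yz: (connect _ y z); case: (connect _ x z) / idP => //= xz + _.
by rewrite (connect_trans xz) // connect_del_edge_sym.
Qed.

Lemma far_endpoint_exists r f : f \in edges g ->
  exists2 z, z \in f & ~~ connect (del_edge g f) r z.
Proof.
case/edgesP=> x [y [gxy ->]]; have := del_edge_disconnects gxy.
case/orP: (del_edge_cover r gxy) => [xr | yr] nxy.
  exists y; rewrite ?set22 //; apply: contra nxy => ry.
  exact: connect_trans xr ry.
exists x; rewrite ?set21 //; apply: contra nxy => rx.
by rewrite connect_del_edge_sym; apply: connect_trans yr rx.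
Qed.

Lemma connect_del_edge_avoid r (f1 f2 : {set 'I_n}) b :
  [forall w in f2, ~~ connect (del_edge g f1) r w] ->
  connect (del_edge g f1) r b -> connect (del_edge g f2) r b.
Proof.
move/forall_inP=> f2_far; move: b; apply: connect_ind => [|a b ra rfa /andP [gab _]].
  exact: connect0.
apply: connect_trans rfa (connect1 _); rewrite /del_edge gab /=.
by apply: contraTneq ra => abf2; apply: f2_far; rewrite -abf2 set21.
Qed.

Lemma far_endpoint_inj r f1 f2 z : f1 \in edges g -> f2 \in edges g ->
  z \in f1 -> ~~ connect (del_edge g f1) r z ->
  z \in f2 -> ~~ connect (del_edge g f2) r z -> f1 = f2.
Proof.
move=> f1e f2e zf1 nz1 zf2 nz2; apply/eqP; apply: contraTT nz2 => f12; rewrite negbK.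
have [a1 ga1 ef1] := edge_at f1e zf1; have [a2 ga2 ef2] := edge_at f2e zf2.
have near_a1 : connect (del_edge g f1) r a1.
  rewrite ef1 in nz1 *; case/orP: (del_edge_cover r ga1) => [zr | a1r].
    by rewrite connect_del_edge_sym zr in nz1.
  by rewrite connect_del_edge_sym.
have step a f : g a z -> [set z; a] != f -> del_edge g f a z.
  by move=> gaz azf; rewrite /del_edge gaz setUC.
apply: connect_trans (connect_del_edge_avoid _ near_a1) (connect1 (step _ _ _ _)).
- apply/forall_inP => w; rewrite ef2 !inE => /orP [] /eqP -> //.
  apply: contra nz1 => ra2; apply: connect_trans ra2 (connect1 (step _ _ _ _)).
    by rewrite sym_g.
  by rewrite -ef2 eq_sym.
- by rewrite sym_g.
- by rewrite -ef1.
Qed.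

Lemma card_edges_tree : #|edges g| <= n.
Proof.
case: (pickP (@predT 'I_n)) => [r _ | no_vertex]; last first.
  suff -> : edges g = set0 by rewrite cards0.
  by apply/setP => f; rewrite in_set0; apply/edgesP => -[x _]; have := no_vertex x.
pose far (f : {set 'I_n}) := odflt r [pick z in f | ~~ connect (del_edge g f) r z].
have farP f : f \in edges g -> (far f \in f) && ~~ connect (del_edge g f) r (far f).
  move=> fe; rewrite /far; case: pickP => [z /andP [-> ->] // | none].
  by have [z zf /negPf nz] := far_endpoint_exists r fe; move: (none z); rewrite zf nz.
have far_inj : {in edges g &, injective far}.
  move=> f1 f2 f1e f2e eq12; have /andP [zf1 nz1] := farP _ f1e.
  have /andP [zf2 nz2] := farP _ f2e; rewrite -eq12 in zf2 nz2.
  exact: far_endpoint_inj f1e f2e zf1 nz1 zf2 nz2.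
rewrite -(card_in_imset far_inj); apply: leq_trans (max_card _) _.
by rewrite card_ord.
Qed.

Section SteinerDistance.

Variable A : {set 'I_n} -> {set 'I_n}.
Hypothesis A_side :
  forall f, f \in edges g -> exists2 x, x \in f & A f = comp_del g f x.

Definition cut_edges (U : {set 'I_n}) := [set f in edges g | separates U (A f)].

Lemma A_sideP f : f \in edges g ->
  exists x y, [/\ g x y, f = [set x; y] & A f = comp_del g f x].
Proof.
move=> fe; have [x xf eA] := A_side fe; have [y gxy ef] := edge_at fe xf.
by exists x, y.
Qed.

Lemma cut_edges_sub U W F : steiner_ok g U W F -> cut_edges U \subset F.
Proof.
case/and4P=> UW FE _ Wconn; apply/subsetP => f; rewrite inE => /andP [fe].
case/andP=> /set0Pn [u /setIP [uU uA]] /set0Pn [v /setDP [vU vA]].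
have [x [y [gxy ef eA]]] := A_sideP fe; apply/negPn/negP => fF.
have uv : connect (del_edge g f) u v.
  have := forall_inP (forall_inP Wconn u (subsetP UW u uU)) v (subsetP UW v vU).
  apply: connect_sub => a b abF; apply: connect1.
  rewrite /del_edge edges_adj ?(subsetP FE _ abF) //=.
  by apply: contraNneq fF => <-.
by move: uA vA; rewrite eA !inE => xu /negP; apply; apply: connect_trans xu uv.
Qed.

Lemma steiner_ok_shrink U W (F : {set {set 'I_n}}) s t :
  g s t -> [set s; t] \in F -> steiner_ok g U W F -> U \subset comp_del g [set s; t] s ->
  exists W' F', steiner_ok g U W' F' && (#|F'| < #|F|).
Proof.
move=> gst stF /and4P [UW FE FW Wconn] UC; set C := comp_del g _ s in UC.
have tC : t \notin C by rewrite inE del_edge_disconnects.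
set F' := [set h in F | h \subset C].
have sW : s \in W by apply: subsetP (forall_inP FW _ stF) _ (set21 s t).
have reach z : z \in W -> z \in C -> connect (fun a b => [set a; b] \in F') s z.
  move=> zW; have := forall_inP (forall_inP Wconn s sW) z zW; move: z {zW}.
  apply: connect_ind => [_|a b _ IHa abF bC]; first exact: connect0.
  have [eab|neab] := eqVneq [set a; b] [set s; t].
    have : b \in [set s; t] by rewrite -eab set22.
    by rewrite !inE => /orP [] /eqP bst; [rewrite bst connect0 | rewrite -bst bC in tC].
  have dba : del_edge g [set s; t] b a.
    by rewrite /del_edge sym_g edges_adj ?(subsetP FE _ abF) // setUC neab.
  have aC : a \in C.
    by move: bC; rewrite !inE => sb; apply: connect_trans sb (connect1 dba).
  apply: connect_trans (IHa aC) (connect1 _).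
  rewrite inE (abF : [set a; b] \in F); apply/subsetP => w.
  by rewrite in_set2 => /orP [] /eqP ->.
exists (W :&: C), F'; apply/andP; split; first (apply/and4P; split).
- by rewrite subsetI UW UC.
- by apply: subset_trans FE; apply/subsetP => h; rewrite inE => /andP [].
- apply/forall_inP => h; rewrite inE => /andP [hF hC].
  by rewrite subsetI hC (forall_inP FW).
- apply/forall_inP => a /setIP [aW aC]; apply/forall_inP => b /setIP [bW bC].
  have symF' : symmetric (fun a b => [set a; b] \in F') by move=> ? ?; rewrite setUC.
  by rewrite (connect_trans _ (reach b bW bC)) // (sym_connect_sym symF') reach.
- apply: proper_card; apply/properP; split.
    by apply/subsetP => h; rewrite inE => /andP [].
  exists [set s; t] => //; rewrite inE stF /=; apply: contra tC => /subsetP; apply.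
  exact: set22.
Qed.

Lemma steiner_ok_full U : steiner_ok g U setT (edges g).
Proof.
apply/and4P; split; rewrite ?subsetT ?subxx //.
  by apply/forall_inP => *; apply: subsetT.
apply/forall_inP => x _; apply/forall_inP => y _.
apply: connect_sub (tree_g.2.1 x y) => a b gab; apply: connect1.
by apply/edgesP; exists a, b.
Qed.

Lemma min_steiner_ok_sub_cut U W F :
  steiner_ok g U W F -> (forall W' F', steiner_ok g U W' F' -> #|F| <= #|F'|) ->
  F \subset cut_edges U.
Proof.
move=> ok Fmin; apply/subsetP => f fF.
have fe : f \in edges g by case/and4P: ok => _ FE _ _; apply: subsetP FE f fF.
rewrite inE fe /=; apply: contraT; rewrite negb_and !negbK => U_A.
suff : exists W' F', steiner_ok g U W' F' && (#|F'| < #|F|).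
  by case=> W' [F' /andP [ok' ltF]]; move: (Fmin W' F' ok'); rewrite leqNgt ltF.
have [x [y [gxy ef eA]]] := A_sideP fe; rewrite ef in fF eA U_A.
case/orP: U_A => /eqP U_A.
- rewrite setUC in fF; apply: steiner_ok_shrink (fF) ok _; first by rewrite sym_g.
  apply/subsetP => u uU; rewrite setUC comp_del_compl // -eA.
  by apply/negP => uA; move/setP: U_A => /(_ u); rewrite !inE uU uA.
- apply: steiner_ok_shrink gxy fF ok _; rewrite -eA; apply/subsetP => u uU.
  by apply/negPn/negP => uA; move/setP: U_A => /(_ u); rewrite !inE uU uA.
Qed.

Lemma steinerE U : steiner g U = #|cut_edges U|.
Proof.
pose ok_pairs (p : {set 'I_n} * {set {set 'I_n}}) := steiner_ok g U p.1 p.2.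
have [[W F] /= ok Fmin] :=
  @arg_minnP _ (setT, edges g) ok_pairs (fun p => #|p.2|) (steiner_ok_full U).
have FE : F = cut_edges U.
  apply/eqP; rewrite eqEsubset (cut_edges_sub ok) andbT.
  by apply: min_steiner_ok_sub_cut ok _ => W' F' ok'; apply: (Fmin (W', F')).
have cut_le_n : #|cut_edges U| <= n.
  apply: leq_trans card_edges_tree; apply/subset_leq_card/subsetP => f.
  by rewrite inE => /andP [].
(* [steiner] caps the minimum at [n]; the cap is harmless since a tree has at
   most [n] edges. *)
apply/eqP; rewrite eqn_leq /steiner -minEnat -!leEnat; apply/andP; split.
  by apply: (bigmin_inf W) => //; apply: (bigmin_inf F) => //; rewrite FE.
apply/bigmin_geP; split => // W' _; apply/bigmin_geP; split => // F' ok'.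
exact: subset_leq_card (cut_edges_sub ok').
Qed.

End SteinerDistance.

End Tree.

Local Open Scope ring_scope.

Section PowerSums.

Variables (R : comNzRingType) (V : finType) (k : nat) (c : V -> R).

Lemma sum_ffun_all_in (P : pred V) :
  \sum_(i : {ffun 'I_k -> V}) [forall j, P (i j)]%:R * \prod_(j : 'I_k) c (i j)
  = (\sum_(x | P x) c x) ^+ k.
Proof.
have -> : (\sum_(x | P x) c x) ^+ k = \prod_(j : 'I_k) \sum_x (P x)%:R * c x.
  rewrite prodr_const card_ord big_mkcond; congr (_ ^+ _).
  by apply: eq_bigr => x _; case: (P x); rewrite ?mul1r ?mul0r.
rewrite bigA_distr_bigA; apply: eq_bigr => i _; rewrite big_split /=; congr (_ * _).
case: (boolP [forall j, _]) => [/forallP Pi | /forallPn [j /negPf Pj]].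
  by rewrite big1 // => j _; rewrite Pi.
by rewrite (bigD1 j) //= Pj mul0r.
Qed.

Lemma separatesE (U S : {set V}) :
  separates U S = ~~ (U \subset ~: S) && ~~ (U \subset S).
Proof. by rewrite /separates setI_eq0 disjoints_subset setD_eq0. Qed.

Lemma sum_ffun_separates (S : {set V}) : (0 < k)%N -> ~~ odd k -> \sum_x c x = 0 ->
  \sum_(i : {ffun 'I_k -> V})
     (separates [set i j | j : 'I_k] S)%:R * \prod_(j : 'I_k) c (i j)
  = - 2 * (\sum_(x in S) c x) ^+ k.
Proof.
move=> k_gt0 k_even c0.
have sep_ind (i : {ffun 'I_k -> V}) : (separates [set i j | j : 'I_k] S)%:R =
    1 - [forall j, i j \in S]%:R - [forall j, i j \in ~: S]%:R :> R.
  have imset_sub (T : {set V}) : ([set i j | j : 'I_k] \subset T) = [forall j, i j \in T].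
    apply/subsetP/forallP => [sub j | all_in _ /imsetP [j _ ->] //].
    by apply: sub; apply: imset_f.
  rewrite separatesE !imset_sub.
  case: forallP => [inS | _]; case: forallP => [inCS | _] //=; rewrite ?subr0 ?subrr //.
  by have := inS (Ordinal k_gt0); rewrite inE inCS.
under eq_bigr do rewrite sep_ind !mulrBl mul1r.
rewrite !sumrB !sum_ffun_all_in.
have sum_all : \sum_(i : {ffun 'I_k -> V}) \prod_(j : 'I_k) c (i j) = 0.
  transitivity (\prod_(j : 'I_k) \sum_x c x); first by rewrite bigA_distr_bigA.
  by rewrite c0 prodr_const card_ord expr0n gtn_eqF.
have sum_compl : \sum_(x in ~: S) c x = - \sum_(x in S) c x.
  apply/eqP; rewrite -addr_eq0 addrC; apply/eqP.
  rewrite -[RHS]c0 [RHS](bigID (mem S)) /=; congr (_ + _).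
  by apply: eq_bigl => x; rewrite in_setC.
rewrite sum_all sum_compl exprNn -signr_odd (negbTE k_even) expr0 mul1r.
ring.
Qed.

End PowerSums.

Lemma alpha'E (R : fieldType) n (c : 'I_n -> R) (S : {set 'I_n}) :
  \sum_i c i = 0 -> alpha' c S = \sum_(i in S) c i.
Proof.
move=> c0; rewrite /alpha'; under eq_bigr do rewrite mulrBr.
rewrite sumrB -mulr_suml c0 mul0r subr0 [RHS]big_mkcond.
by apply: eq_bigr => i _; case: (i \in S); rewrite ?mulr1 ?mulr0.
Qed.

Unset Implicit Arguments.

Theorem mainTheorem2 (R : realFieldType) (n k : nat) (g : rel 'I_n)
  (A : {set 'I_n} -> {set 'I_n}) (c : 'I_n -> R) :
  (2 <= n)%N -> is_tree g -> (2 <= k)%N -> ~~ odd k ->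
  (forall f, f \in edges g -> exists2 x, x \in f & A f = comp_del g f x) ->
  \sum_(i : 'I_n) c i = 0 ->
  steiner_form k g c = - 2 * \sum_(f in edges g) (alpha' c (A f)) ^+ k.
Proof.
move=> _ tree_g k_ge2 k_even A_side c0.
rewrite /steiner_form; under eq_bigr do rewrite (steinerE tree_g A_side).
have card_cut U : #|cut_edges g A U|%:R =
    \sum_(f in edges g) (separates U (A f))%:R :> R.
  rewrite -sum1_card natr_sum big_mkcond [RHS]big_mkcond; apply: eq_bigr => f _.
  by rewrite [f \in cut_edges _ _ _]inE; case: (f \in edges g); case: separates.
under eq_bigr do rewrite card_cut mulr_suml.
rewrite exchange_big mulr_sumr; apply: eq_bigr => f _.
by rewrite alpha'E // sum_ffun_separates // ltnW.
Qed.
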